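(* In the Core Tuplix Calculus $\mathbf{CTC}$ over a nonempty attribute set $A$ and a non-trivial cancellation meadow $\mathcal{D}$ (defined in the context), the following two rules are derivable: (i) for all data terms $p,q$, every data variable $u$ and every tuplix term $t$, if $\mathcal{D}\models p=q$ then $\mathbf{CTC}\vdash t[p/u]=t[q/u]$; (ii) for every tuplix term $t$, data variable $u$ and data term $p$, $\mathbf{CTC}\vdash t\oplus\gamma(u-p)=t[p/u]\oplus\gamma(u-p)$. Here $t[p/u]$ denotes replacement of all occurrences of the data variable $u$ in $t$ by $p$.
   Context: Data: a meadow is a commutative ring with unit with a total unary operation $(\cdot)^{-1}$ satisfying $(u^{-1})^{-1}=u$ and $u\cdot(u\cdot u^{-1})=u$; a non-trivial cancellation meadow additionally satisfies $0\neq 1$ and the cancellation law ($u\neq 0$ and $uv=uw$ imply $v=w$). Fix such a structure $\mathcal{D}$. Data terms are built from data variables, constants $0,1$, binary $+,\cdot$ and unary $-$, $(\cdot)^{-1}$; write $p/q$ for $p\cdot q^{-1}$ and $p-q$ for $p+(-q)$; $\mathcal{D}\models p=q$ means the identity holds for all valuations in $\mathcal{D}$. Fix a nonempty set $A$ of attributes. Tuplix terms are built from tuplix variables, constants $\epsilon$ and $\delta$, entries $a(p)$ ($a\in A$, $p$ a data term), zero tests $\gamma(p)$, and the binary operator $\oplus$. $\mathbf{CTC}$ is the two-sorted equational proof system with axioms (T1) $x\oplus y=y\oplus x$; (T2) $(x\oplus y)\oplus z=x\oplus(y\oplus z)$; (T3) $x\oplus\epsilon=x$; (T4) $x\oplus\delta=\delta$;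 (T5) $a(u)\oplus a(v)=a(u+v)$; (T6) $\gamma(u)=\gamma(u/u)$; (T7) $\gamma(0)=\epsilon$; (T8) $\gamma(1)=\delta$; (T9) $\gamma(u)\oplus\gamma(v)=\gamma(u/u+v/v)$; (T10) $\gamma(u-v)\oplus a(u)=\gamma(u-v)\oplus a(v)$ (for all $a\in A$), together with the rule (DE): for all data terms $p,q$, if $\mathcal{D}\models p=q$ then $\gamma(p)=\gamma(q)$ is derivable. *)

From mathcomp Require Import all_boot all_algebra.
Set Implicit Arguments. Unset Strict Implicit. Unset Printing Implicit Defensive.
Import GRing.Theory.
Local Open Scope ring_scope.

Definition is_meadow (D : comPzRingType) (inv : D -> D) : Prop :=
  (forall u : D, inv (inv u) = u) /\ (forall u : D, u * (u * inv u) = u).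

Definition is_nt_cancellation_meadow (D : comPzRingType) (inv : D -> D) : Prop :=
  [/\ is_meadow inv, (0 : D) <> 1 &
      forall u v w : D, u <> 0 -> u * v = u * w -> v = w].

Inductive dterm : Type :=
| DVar : nat -> dterm
| D0 : dterm
| D1 : dterm
| DAdd : dterm -> dterm -> dterm
| DMul : dterm -> dterm -> dterm
| DNeg : dterm -> dterm
| DInv : dterm -> dterm.

Definition DDiv (p q : dterm) : dterm := DMul p (DInv q).
Definition DSub (p q : dterm) : dterm := DAdd p (DNeg q).

Fixpoint deval (D : comPzRingType) (inv : D -> D) (rho : nat -> D) (p : dterm) : D :=
  match p with
  | DVar n => rho n
  | D0 => 0
  | D1 => 1
  | DAdd p1 p2 => deval inv rho p1 + deval inv rho p2
  | DMul p1 p2 => deval inv rho p1 * deval inv rho p2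
  | DNeg p1 => - deval inv rho p1
  | DInv p1 => inv (deval inv rho p1)
  end.

Definition dmodels (D : comPzRingType) (inv : D -> D) (p q : dterm) : Prop :=
  forall rho : nat -> D, deval inv rho p = deval inv rho q.

Fixpoint dsubst (u : nat) (p : dterm) (r : dterm) : dterm :=
  match r with
  | DVar n => if n == u then p else DVar n
  | D0 => D0
  | D1 => D1
  | DAdd r1 r2 => DAdd (dsubst u p r1) (dsubst u p r2)
  | DMul r1 r2 => DMul (dsubst u p r1) (dsubst u p r2)
  | DNeg r1 => DNeg (dsubst u p r1)
  | DInv r1 => DInv (dsubst u p r1)
  end.

Inductive tterm (A : Type) : Type :=
| TVar : nat -> tterm A
| TEps : tterm A
| TDelta : tterm A
| TEntry : A -> dterm -> tterm A
| TGamma : dterm -> tterm A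
| TPlus : tterm A -> tterm A -> tterm A.

Arguments TEps {A}.
Arguments TDelta {A}.
Arguments TVar {A}.
Arguments TGamma {A}.

Fixpoint tsubst (A : Type) (u : nat) (p : dterm) (t : tterm A) : tterm A :=
  match t with
  | TVar x => TVar x
  | TEps => TEps
  | TDelta => TDelta
  | TEntry a r => TEntry a (dsubst u p r)
  | TGamma r => TGamma (dsubst u p r)
  | TPlus t1 t2 => TPlus (tsubst u p t1) (tsubst u p t2)
  end.

(* Equational logic on tuplix terms (reflexivity, symmetry, transitivity,
   congruence for the only tuplix-level operator (+)), with all substitution
   instances of axioms T1-T10 (axiom schemas over arbitrary tuplix terms
   x,y,z and data terms u,v), together with the rule (DE). *)
Inductive CTC (A : Type) (D : comPzRingType) (inv : D -> D) :
    tterm A -> tterm A -> Prop :=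
| ctc_refl t : CTC inv t t
| ctc_sym t s : CTC inv t s -> CTC inv s t
| ctc_trans t s r : CTC inv t s -> CTC inv s r -> CTC inv t r
| ctc_cong_plus t1 t2 s1 s2 :
    CTC inv t1 s1 -> CTC inv t2 s2 -> CTC inv (TPlus t1 t2) (TPlus s1 s2)
| ctc_T1 x y : CTC inv (TPlus x y) (TPlus y x)
| ctc_T2 x y z : CTC inv (TPlus (TPlus x y) z) (TPlus x (TPlus y z))
| ctc_T3 x : CTC inv (TPlus x TEps) x
| ctc_T4 x : CTC inv (TPlus x TDelta) TDelta
| ctc_T5 (a : A) u v : CTC inv (TPlus (TEntry a u) (TEntry a v)) (TEntry a (DAdd u v))
| ctc_T6 u : CTC inv (TGamma u) (TGamma (DDiv u u))
| ctc_T7 : CTC inv (TGamma D0) TEps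
| ctc_T8 : CTC inv (TGamma D1) TDelta
| ctc_T9 u v : CTC inv (TPlus (TGamma u) (TGamma v))
                       (TGamma (DAdd (DDiv u u) (DDiv v v)))
| ctc_T10 (a : A) u v : CTC inv (TPlus (TGamma (DSub u v)) (TEntry a u))
                               (TPlus (TGamma (DSub u v)) (TEntry a v))
| ctc_DE p q : dmodels inv p q -> CTC inv (TGamma p) (TGamma q).

From mathcomp Require Import all_boot all_algebra.
From Stdlib Require Import Setoid.
Set Implicit Arguments. Unset Strict Implicit. Unset Printing Implicit Defensive.
Import GRing.Theory.
Local Open Scope ring_scope.

(* In a cancellation meadow [z / z] is the 0/1 indicator of [z != 0], so by
   (T6) and (DE) a zero test [γ(p)] depends only on the zero set of [p].  If
   [1 + 1 = 0], axioms (T7)-(T9) give [ε = δ] and CTC identifies all terms;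
   otherwise [γ(p) ⊕ γ(q) = γ(r)] whenever the zero set of [r] is the
   intersection of those of [p] and [q].  Rule (i) is then a structural
   induction, reducing entries to (T10) with the test [γ(p - q) = ε].  For
   rule (ii), [γ(u - p)] is idempotent, so it may be distributed over the
   summands of [t]; on an entry [a(r)] we first add the test [γ(r - r[p/u])],
   which [γ(u - p)] absorbs since [r = r[p/u]] wherever [u = p], and then
   apply (T10). *)

Section DataSemantics.

Variables (D : comPzRingType) (inv : D -> D).

Lemma eq_deval (rho1 rho2 : nat -> D) p :
  rho1 =1 rho2 -> deval inv rho1 p = deval inv rho2 p.
Proof. by move=> eq_rho; elim: p => //= [p -> q ->|p -> q ->|p ->|p ->]. Qed.

Lemma deval_dsubst (rho : nat -> D) u p r :
  deval inv rho (dsubst u p r) =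
  deval inv (fun n => if n == u then deval inv rho p else rho n) r.
Proof. by elim: r => //= [n|r -> s ->|r -> s ->|r ->|r ->] //; case: (n == u). Qed.

Lemma deval_dsubst_id (rho : nat -> D) u p r :
  rho u = deval inv rho p -> deval inv rho (dsubst u p r) = deval inv rho r.
Proof. by move=> rho_u; rewrite deval_dsubst; apply: eq_deval => n; case: eqP => // ->. Qed.

Lemma dmodels_dsubst u p q r :
  dmodels inv p q -> dmodels inv (dsubst u p r) (dsubst u q r).
Proof. by move=> pq rho; rewrite !deval_dsubst pq. Qed.

End DataSemantics.

Section CancellationMeadow.

Variables (D : comPzRingType) (inv : D -> D).
Hypothesis meadowD : is_nt_cancellation_meadow inv.

Lemma meadow_mulrV (z : D) : z * inv z = (z != 0)%:R.
Proof.
have [-> | nz_z] := eqVneq z 0; first by rewrite mul0r.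
case: meadowD => [[_ zzVz] _ cancel]; apply: (cancel z); first exact/eqP.
by rewrite zzVz mulr1.
Qed.

Lemma meadow_addrV_eq0 (x y : D) : 1 + 1 != 0 :> D ->
  (x * inv x + y * inv y == 0) = (x == 0) && (y == 0).
Proof.
case: meadowD => _ /eqP; rewrite eq_sym => oner_neq0 _ two_neq0.
rewrite !meadow_mulrV; case: (x == 0); case: (y == 0) => /=;
  by rewrite ?addr0 ?add0r ?eqxx ?(negbTE oner_neq0) ?(negbTE two_neq0).
Qed.

End CancellationMeadow.

Add Parametric Relation (A : Type) (D : comPzRingType) (inv : D -> D) :
  (tterm A) (@CTC A D inv)
  reflexivity proved by (@ctc_refl A D inv)
  symmetry proved by (@ctc_sym A D inv)
  transitivity proved by (@ctc_trans A D inv) as ctc_setoid.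

Add Parametric Morphism (A : Type) (D : comPzRingType) (inv : D -> D) :
  (@TPlus A) with signature @CTC A D inv ==> @CTC A D inv ==> @CTC A D inv
  as tplus_ctc.
Proof. by move=> x x' xx' y y' yy'; apply: ctc_cong_plus. Qed.

#[local] Hint Resolve ctc_refl : core.

Section CTCTheory.

Variables (A : Type) (D : comPzRingType) (inv : D -> D).

Local Notation "x ⊕ y" := (@TPlus A x y) (at level 50, left associativity).
Local Notation "t ≡ s" := (@CTC A D inv t s) (at level 70).

Lemma ctc_plusCA x y z : x ⊕ (y ⊕ z) ≡ y ⊕ (x ⊕ z).
Proof. by rewrite -!ctc_T2 (ctc_T1 _ x y). Qed.

Lemma ctc_plusACA x y z w : (x ⊕ y) ⊕ (z ⊕ w) ≡ (x ⊕ z) ⊕ (y ⊕ w).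
Proof. by rewrite !ctc_T2 (ctc_plusCA y). Qed.

Lemma ctc_entry_DE a p q : dmodels inv p q -> TEntry a p ≡ TEntry a q.
Proof.
move=> pq; have gamma_eps : TGamma (DSub p q) ≡ TEps.
  by rewrite -(ctc_T7 A inv); apply: ctc_DE => rho /=; rewrite pq subrr.
by rewrite -(ctc_T3 inv (TEntry a p)) -gamma_eps ctc_T1 ctc_T10 ctc_T1 gamma_eps ctc_T3.
Qed.

Lemma ctc_tsubst_DE u p q (t : tterm A) :
  dmodels inv p q -> tsubst u p t ≡ tsubst u q t.
Proof.
move=> pq; elim: t => //= [a r|r|t1 IH1 t2 IH2].
- exact/ctc_entry_DE/dmodels_dsubst.
- exact/ctc_DE/dmodels_dsubst.
- exact: ctc_cong_plus.
Qed.

Hypothesis meadowD : is_nt_cancellation_meadow inv.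

Lemma ctc_trivial_char2 : 1 + 1 = 0 :> D -> forall t s : tterm A, t ≡ s.
Proof.
move=> two_eq0.
have eps_delta : TEps ≡ TDelta.
  have zero_one_one : TGamma D0 ≡ TGamma D1 ⊕ TGamma D1.
    rewrite ctc_T9; apply: ctc_DE => rho /=.
    by case: meadowD => _ /eqP oner_neq0 _; rewrite meadow_mulrV // eq_sym oner_neq0.
  by rewrite -(ctc_T7 A inv) zero_one_one ctc_T8 ctc_T4.
suff to_delta t : t ≡ TDelta by move=> t s; rewrite (to_delta t) (to_delta s).
by rewrite -(ctc_T3 inv t) eps_delta ctc_T4.
Qed.

Lemma ctc_gamma_eq0 p q :
  (forall rho, (deval inv rho p == 0) = (deval inv rho q == 0)) ->
  TGamma p ≡ TGamma q.
Proof.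
move=> pq; rewrite (ctc_T6 A inv p) (ctc_T6 A inv q); apply: ctc_DE => rho /=.
by rewrite !meadow_mulrV // pq.
Qed.

Hypothesis two_neq0 : 1 + 1 != 0 :> D.

Lemma ctc_gamma_plus p q r :
  (forall rho, (deval inv rho r == 0) =
               (deval inv rho p == 0) && (deval inv rho q == 0)) ->
  TGamma p ⊕ TGamma q ≡ TGamma r.
Proof.
by move=> pqr; rewrite ctc_T9; apply: ctc_gamma_eq0 => rho /=; rewrite meadow_addrV_eq0.
Qed.

Lemma ctc_gamma_absorb p q :
  (forall rho, deval inv rho p = 0 -> deval inv rho q = 0) ->
  TGamma p ⊕ TGamma q ≡ TGamma p.
Proof.
move=> pq; apply: ctc_gamma_plus => rho.
by case: eqP => [/pq/eqP -> | _].
Qed.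

Section SubstUnderTest.

Variables (u : nat) (p : dterm).
Local Notation g := (TGamma (DSub (DVar u) p)).

Lemma ctc_entry_under_test a r : TEntry a r ⊕ g ≡ TEntry a (dsubst u p r) ⊕ g.
Proof.
set s := DSub r (dsubst u p r).
have split_g : g ≡ g ⊕ TGamma s.
  symmetry; apply: ctc_gamma_absorb => rho /= /subr0_eq rho_u.
  by rewrite deval_dsubst_id // subrr.
rewrite split_g !(ctc_plusCA (TEntry a _)) (ctc_T1 _ (TEntry a r)) ctc_T10.
by rewrite (ctc_T1 _ (TGamma s)).
Qed.

Lemma ctc_gamma_under_test r : TGamma r ⊕ g ≡ TGamma (dsubst u p r) ⊕ g.
Proof.
rewrite !ctc_T9; apply: ctc_gamma_eq0 => rho /=.
rewrite !meadow_addrV_eq0 // subr_eq0.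
by have [rho_u | _] := eqVneq (rho u); rewrite ?andbF // deval_dsubst_id.
Qed.

Lemma ctc_tsubst_under_test t : t ⊕ g ≡ tsubst u p t ⊕ g.
Proof.
elim: t => //= [a r|r|t1 IH1 t2 IH2].
- exact: ctc_entry_under_test.
- exact: ctc_gamma_under_test.
have g_idem : g ⊕ g ≡ g by apply: ctc_gamma_absorb.
by rewrite -{1}g_idem ctc_plusACA IH1 IH2 -ctc_plusACA g_idem.
Qed.

End SubstUnderTest.

End CTCTheory.

Theorem mainTheorem4 (A : Type) (D : comPzRingType) (inv : D -> D) :
  inhabited A ->
  is_nt_cancellation_meadow inv ->
  (forall (p q : dterm) (u : nat) (t : tterm A),
      dmodels inv p q -> CTC inv (tsubst u p t) (tsubst u q t)) /\
  (forall (t : tterm A) (u : nat) (p : dterm),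
      CTC inv (TPlus t (TGamma (DSub (DVar u) p)))
              (TPlus (tsubst u p t) (TGamma (DSub (DVar u) p)))).
Proof.
move=> _ meadowD; split=> [p q u t | t u p]; first exact: ctc_tsubst_DE.
have [two_eq0 | two_neq0] := eqVneq (1 + 1 : D) 0.
- exact: ctc_trivial_char2.
- exact: ctc_tsubst_under_test.
Qed.
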